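(* Let $f\in\mathbb{Z}_2[x]$, $n\ge1$, and let $\sigma$ be a growing $k$-cycle of $f_n$. Then its (unique) lift either strongly grows or strongly splits.
   Context: $f_n$ is the induced map on $\mathbb{Z}/2^n\mathbb{Z}$, $f_n(x\bmod 2^n)=f(x)\bmod 2^n$. A $k$-cycle of $f_n$ is a tuple $\sigma=(x_1,\dots,x_k)$ of distinct elements with $f_n(x_i)=x_{i+1}$, $f_n(x_k)=x_1$; $\sigma$ grows if $\{y\in\mathbb{Z}/2^{n+1}\mathbb{Z}:y\bmod 2^n\in\sigma\}$ is a single cycle of $f_{n+1}$ (of length $2k$), called its lift. For a cycle of length $\ell$ at level $m$ and a representative $x\in\mathbb{Z}_2$ of one of its points, $a_m=(f^\ell)'(x)$ and $b_m=(f^\ell(x)-x)/2^m$; the cycle strongly grows if $a_m\equiv1\pmod4$ and $b_m$ is odd, and strongly splits if $a_m\equiv1\pmod4$ and $b_m$ is even. *)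

From HB Require Import structures.
From mathcomp Require Import all_boot all_order all_algebra.
From mathcomp Require Import boolp.
Set Implicit Arguments. Unset Strict Implicit. Unset Printing Implicit Defensive.
Import Order.TTheory GRing.Theory Num.Theory.

(* The ring Z_2 of 2-adic integers, as the inverse limit of the Z/2^n:      *)
(* an element is a coherent sequence of residues x_n in [0, 2^n) with      *)
(* x_{n+1} mod 2^n = x_n (coherence forces x_n < 2^n).                       *)
Record Z2 := MkZ2 { z2seq : nat -> nat ;
                    z2coh : forall n, z2seq n.+1 %% 2 ^ n = z2seq n }.

HB.instance Definition _ := gen_eqMixin Z2.
HB.instance Definition _ := gen_choiceMixin Z2.

Lemma z2_ext (x y : Z2) : (forall n, z2seq x n = z2seq y n) -> x = y.
Proof.
case: x y => [x hx] [y hy] /= e.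
have exy : x = y by apply: funext.
subst y; congr MkZ2; exact: Prop_irrelevance.
Qed.

Lemma z2_mod (x : Z2) n : z2seq x n %% 2 ^ n = z2seq x n.
Proof. by rewrite -z2coh modn_mod. Qed.

Lemma dvd2S n : 2 ^ n %| 2 ^ n.+1.
Proof. by rewrite expnS dvdn_mull. Qed.

Definition z2_of_fun (f : nat -> nat)
  (hf : forall n, f n.+1 %% 2 ^ n = f n %% 2 ^ n) : Z2.
refine (@MkZ2 (fun n => f n %% 2 ^ n) _).
move=> n; by rewrite modn_dvdm ?dvd2S // hf.
Defined.

Lemma z2_of_funE f hf n : z2seq (@z2_of_fun f hf) n = f n %% 2 ^ n.
Proof. by []. Qed.

Lemma z2_zero_coh n : 0 %% 2 ^ n = 0 %% 2 ^ n. Proof. by []. Qed.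
Definition z2zero : Z2 := z2_of_fun z2_zero_coh.

Lemma z2_one_coh n : 1 %% 2 ^ n.+1 %% 2 ^ n = 1 %% 2 ^ n.
Proof. by rewrite modn_dvdm ?dvd2S. Qed.

Lemma z2_add_coh (x y : Z2) n :
  (z2seq x n.+1 + z2seq y n.+1) %% 2 ^ n = (z2seq x n + z2seq y n) %% 2 ^ n.
Proof. by rewrite -modnDm !z2coh. Qed.
Definition z2add (x y : Z2) : Z2 := z2_of_fun (z2_add_coh x y).

Lemma z2_mul_coh (x y : Z2) n :
  (z2seq x n.+1 * z2seq y n.+1) %% 2 ^ n = (z2seq x n * z2seq y n) %% 2 ^ n.
Proof. by rewrite -modnMm !z2coh. Qed.
Definition z2mul (x y : Z2) : Z2 := z2_of_fun (z2_mul_coh x y).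

Lemma z2_opp_coh (x : Z2) n :
  (2 ^ n.+1 - z2seq x n.+1) %% 2 ^ n = (2 ^ n - z2seq x n) %% 2 ^ n.
Proof.
have lt1 : z2seq x n.+1 <= 2 ^ n.+1.
  by rewrite -z2_mod ltnW // ltn_mod expn_gt0.
have lt0 : z2seq x n <= 2 ^ n.
  by rewrite -z2_mod ltnW // ltn_mod expn_gt0.
apply/eqP; rewrite -(eqn_modDr (z2seq x n.+1)) subnK //.
rewrite expnS modnMl -modnDmr z2coh subnK // modnn //.
Qed.
Definition z2opp (x : Z2) : Z2 := z2_of_fun (z2_opp_coh x).

Lemma z2_addA : associative z2add.
Proof. by move=> x y z; apply: z2_ext => n /=; rewrite modnDml modnDmr addnA. Qed.
Lemma z2_addC : commutative z2add.
Proof. by move=> x y; apply: z2_ext => n /=; rewrite addnC. Qed.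
Lemma z2_add0 : left_id z2zero z2add.
Proof. by move=> x; apply: z2_ext => n /=; rewrite mod0n add0n z2_mod. Qed.
Lemma z2_addN : left_inverse z2zero z2opp z2add.
Proof.
move=> x; apply: z2_ext => n /=; rewrite modnDml subnK ?modnn ?mod0n //.
by rewrite -z2_mod ltnW // ltn_mod expn_gt0.
Qed.

HB.instance Definition _ := GRing.isZmodule.Build Z2 z2_addA z2_addC z2_add0 z2_addN.

Definition z2one : Z2 := MkZ2 z2_one_coh.

Lemma z2_mulA : associative z2mul.
Proof. by move=> x y z; apply: z2_ext => n /=; rewrite modnMml modnMmr mulnA. Qed.
Lemma z2_mulC : commutative z2mul.
Proof. by move=> x y; apply: z2_ext => n /=; rewrite mulnC. Qed.
Lemma z2_mul1 : left_id z2one z2mul.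
Proof. by move=> x; apply: z2_ext => n /=; rewrite modnMml mul1n z2_mod. Qed.
Lemma z2_mulDl : left_distributive z2mul (@GRing.add Z2).
Proof.
move=> x y z; apply: z2_ext => n /=.
by rewrite modnMml modnDml modnDmr mulnDl.
Qed.
Lemma z2_one_neq0 : z2one != 0%R.
Proof.
apply/eqP => /(congr1 (fun x => z2seq x 1)) /=.
by rewrite /z2zero /=.
Qed.

HB.instance Definition _ := GRing.Zmodule_isComNzRing.Build Z2
  z2_mulA z2_mulC z2_mul1 z2_mulDl z2_one_neq0.

Local Open Scope ring_scope.
Unset Implicit Arguments.

(* x mod 2^n, for x in Z_2 (used for n >= 1, where 'Z_(2^n) is Z/2^nZ). *)
Definition z2red (n : nat) (x : Z2) : 'Z_(2 ^ n) := inZp (z2seq x n).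

Definition zres (n : nat) (y : 'Z_(2 ^ n.+1)) : 'Z_(2 ^ n) := inZp (nat_of_ord y).

(* f_n (x mod 2^n) = f(x) mod 2^n, computed on the representative
   y%:R in Z_2 of the class y (f(x) mod 2^n only depends on x mod 2^n). *)
Definition fn (f : {poly Z2}) (n : nat) (y : 'Z_(2 ^ n)) : 'Z_(2 ^ n) :=
  z2red n f.[(nat_of_ord y)%:R].
Arguments fn f n y : clear implicits.
Arguments zres n y : clear implicits.

Definition is_cycle (T : eqType) (g : T -> T) (s : seq T) : Prop :=
  [&& s != [::], uniq s & fcycle g s].
Arguments is_cycle {T} g s.

Definition is_lift (f : {poly Z2}) (n : nat) (s : seq 'Z_(2 ^ n))
    (s' : seq 'Z_(2 ^ n.+1)) : Prop :=
  is_cycle (fn f n.+1) s' /\ forall y, (y \in s') = (zres n y \in s).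

Definition grows (f : {poly Z2}) (n : nat) (s : seq 'Z_(2 ^ n)) : Prop :=
  exists s', is_lift f n s s' /\ size s' = (2 * size s)%N.

Definition poly_iter (f : {poly Z2}) (l : nat) : {poly Z2} :=
  iter l (fun g => f \Po g) 'X.

Definition a_coef (f : {poly Z2}) (l : nat) (x : Z2) : Z2 :=
  (poly_iter f l)^`().[x].

Definition z2even (b : Z2) : Prop := exists c : Z2, b = 2 * c.

(* For a cycle of length l at level m and a representative x of one of its
   points: a_m = 1 mod 4 and b_m = (f^l(x) - x)/2^m is odd (resp. even). *)
Definition strongly_grows_at (f : {poly Z2}) (m l : nat) (x : Z2) : Prop :=
  (exists c, a_coef f l x = 1 + 4 * c) /\
  exists b : Z2, (poly_iter f l).[x] - x = 2 ^+ m * b /\ ~ z2even b.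

Definition strongly_splits_at (f : {poly Z2}) (m l : nat) (x : Z2) : Prop :=
  (exists c, a_coef f l x = 1 + 4 * c) /\
  exists b : Z2, (poly_iter f l).[x] - x = 2 ^+ m * b /\ z2even b.

From HB Require Import structures.
From mathcomp Require Import all_boot all_order all_algebra.
From mathcomp Require Import boolp ring.
Set Implicit Arguments. Unset Strict Implicit. Unset Printing Implicit Defensive.
Import GRing.Theory.
Local Open Scope ring_scope.

(* Put g := f^k, where k is the length of the cycle at level n, and let x
   represent a point of the lift, so g(x) = x + 2^n t.  Since x and x + 2^n
   are distinct points of the lift, and g is injective on a cycle, they have
   distinct images mod 2^(n+1); by Taylor expansion this forces g'(x) to be
   odd.  The lift has length 2k, so by the chain rule
   a = (f^(2k))'(x) = g'(g(x)) g'(x), and g'(x + 2^n t) = g'(x) mod 4 because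
   n >= 1.  Hence a is an odd square mod 4, i.e. a = 1 mod 4, and b is either
   odd or even. *)

Section Taylor.

Variable R : comNzRingType.
Implicit Types (p : {poly R}) (x h : R).

Lemma horner_add_taylor p x h :
  exists w, p.[x + h] = p.[x] + h * p^`().[x] + h ^+ 2 * w.
Proof.
elim/poly_ind: p => [|p c [w IH]]; first by exists 0; rewrite deriv0 !horner0; ring.
exists (p^`().[x] + w * (x + h)).
by rewrite derivMXaddC !hornerMXaddC hornerD hornerM hornerX IH; ring.
Qed.

Lemma deriv_horner_add_taylor p x h :
  exists u v, p^`().[x + h] = p^`().[x] + 2 * h * u + h ^+ 2 * v.
Proof.
elim/poly_ind: p => [|p c [u [v IH]]].
  by exists 0, 0; rewrite deriv0 !horner0; ring.
have [w Hw] := horner_add_taylor p x h.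
exists (p^`().[x] + u * (x + h)), (w + v * (x + h)).
by rewrite derivMXaddC !hornerD !hornerM !hornerX Hw IH; ring.
Qed.

Lemma horner_add_exp2_even_deriv p x n e : (0 < n)%N ->
  p^`().[x] = 2 * e -> exists c, p.[x + 2 ^+ n] = p.[x] + 2 ^+ n.+1 * c.
Proof.
case: n => // n _ de; have [w ->] := horner_add_taylor p x (2 ^+ n.+1).
by exists (e + 2 ^+ n * w); rewrite de !exprS; ring.
Qed.

Lemma deriv_horner_add_double p x h :
  exists c, p^`().[x + 2 * h] = p^`().[x] + 4 * c.
Proof.
have [u [v ->]] := deriv_horner_add_taylor p x (2 * h).
by exists (h * u + h ^+ 2 * v); ring.
Qed.

End Taylor.

Lemma poly_iterD (f : {poly Z2}) i j :
  poly_iter f (i + j) = poly_iter f i \Po poly_iter f j.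
Proof.
elim: i => [|i IH]; first by rewrite add0n comp_polyX.
by rewrite addSn /= IH comp_polyA.
Qed.

Lemma a_coefD (f : {poly Z2}) i j x :
  a_coef f (i + j) x = a_coef f i (poly_iter f j).[x] * a_coef f j x.
Proof. by rewrite /a_coef poly_iterD deriv_comp hornerM horner_comp. Qed.

Section Cycles.

Variables (T : eqType) (g : T -> T) (s : seq T).
Hypothesis cycle_s : fcycle g s.

Lemma iter_size_fcycle x : x \in s -> iter (size s) g x = x.
Proof.
case/rot_to=> i p e; move: cycle_s.
rewrite -(rot_cycle i) -(size_rot i) e /= => /fpathP [m em].
have size_m : (size p).+1 = m by rewrite -(size_traject g (g x) m) -em size_rcons.
by rewrite -iterS size_m -last_traject -em last_rcons.
Qed.

Lemma iter_fcycle_inj k : {in s &, injective (iter k g)}.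
Proof.
move=> x y xs ys e.
have iter_mul_size z m : z \in s -> iter (size s * m) g z = z.
  move=> zs; elim: m => [|m IH]; first by rewrite muln0.
  by rewrite mulnS iterD IH iter_size_fcycle.
have le_k : (k <= size s * k)%N by rewrite leq_pmull //; case: (s) xs.
rewrite -(iter_mul_size x k xs) -(iter_mul_size y k ys) -(subnK le_k).
by rewrite !iterD e.
Qed.

End Cycles.

Lemma z2seq_modn (x : Z2) i j : (i <= j)%N -> (z2seq x j %% 2 ^ i)%N = z2seq x i.
Proof.
move=> /subnK <-; elim: (j - i)%N => [|d IH]; first by rewrite add0n z2_mod.
by rewrite addSn -IH -(z2coh x (d + i)) modn_dvdm // dvdn_exp2l // leq_addl.
Qed.

Lemma z2seq_natr N m : z2seq (N%:R : Z2) m = (N %% 2 ^ m)%N.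
Proof.
elim: N => [|N IH]; first by rewrite /= mod0n.
by rewrite mulrS /= IH modnDm add1n.
Qed.

Lemma z2_exp2_dvd {x : Z2} {m} : z2seq x m = 0%N -> exists b : Z2, x = 2 ^+ m * b.
Proof.
move=> x0.
have dvd_x j : (2 ^ m %| z2seq x (j + m))%N.
  by rewrite /dvdn z2seq_modn ?leq_addl // x0.
have coh j : ((z2seq x (j.+1 + m) %/ 2 ^ m) %% 2 ^ j
            = (z2seq x (j + m) %/ 2 ^ m) %% 2 ^ j)%N.
  rewrite (divn_eq (z2seq x (j.+1 + m)) (2 ^ (j + m))) addSn z2coh expnD mulnA.
  by rewrite divnMDl ?expn_gt0 // modnMDl.
exists (z2_of_fun coh); apply: z2_ext => j.
rewrite /= -natrX z2seq_natr modnMm mulnC divnK //.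
by rewrite z2seq_modn // leq_addr.
Qed.

Lemma Zp_trunc_exp2 m : (0 < m)%N -> (Zp_trunc (2 ^ m)).+2 = (2 ^ m)%N.
Proof.
move=> m_gt0; have : (2 <= 2 ^ m)%N by rewrite -{1}(expn1 2) leq_exp2l.
by rewrite /Zp_trunc; case: (2 ^ m)%N => [|[|]].
Qed.

Section Reduction.

Variable m : nat.
Hypothesis m_gt0 : (0 < m)%N.

Lemma z2red_val x : nat_of_ord (z2red m x) = z2seq x m.
Proof. by rewrite /= Zp_trunc_exp2 // z2_mod. Qed.

Lemma z2red_eq x y : z2red m x = z2red m y <-> z2seq x m = z2seq y m.
Proof.
split=> [/(congr1 (@nat_of_ord _)) | e]; first by rewrite !z2red_val.
apply: val_inj.
by change (nat_of_ord (z2red m x) = nat_of_ord (z2red m y)); rewrite !z2red_val.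
Qed.

Lemma z2redD x y : z2red m (x + y) = z2red m x + z2red m y.
Proof.
apply: val_inj; change (nat_of_ord (z2red m (x + y)%R)
  = (nat_of_ord (z2red m x) + nat_of_ord (z2red m y)) %% (Zp_trunc (2 ^ m)).+2)%N.
by rewrite !z2red_val Zp_trunc_exp2.
Qed.

Lemma z2redM x y : z2red m (x * y) = z2red m x * z2red m y.
Proof.
apply: val_inj; change (nat_of_ord (z2red m (x * y)%R)
  = (nat_of_ord (z2red m x) * nat_of_ord (z2red m y)) %% (Zp_trunc (2 ^ m)).+2)%N.
by rewrite !z2red_val Zp_trunc_exp2.
Qed.

Lemma z2redB x y : z2red m (x - y) = z2red m x - z2red m y.
Proof. by apply/(addIr (z2red m y)); rewrite -z2redD !subrK. Qed.

Lemma z2red_exp2 : z2red m (2 ^+ m) = 0.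
Proof.
apply: val_inj; change (nat_of_ord (z2red m (2 ^+ m)) = 0%N).
by rewrite z2red_val -natrX z2seq_natr modnn.
Qed.

Lemma z2red_eqP x y : z2red m x = z2red m y <-> exists b, x = y + 2 ^+ m * b.
Proof.
split=> [e | [b ->]]; last by rewrite z2redD z2redM z2red_exp2 mul0r addr0.
have [b hb] : exists b, x - y = 2 ^+ m * b.
  by apply: z2_exp2_dvd; rewrite -z2red_val z2redB e subrr.
by exists b; rewrite -hb addrC subrK.
Qed.

Lemma z2red_horner (p : {poly Z2}) x y :
  z2red m x = z2red m y -> z2red m p.[x] = z2red m p.[y].
Proof.
move=> e; elim/poly_ind: p => [|p c IH]; first by rewrite !horner0.
by rewrite !hornerMXaddC !z2redD !z2redM IH e.
Qed.

Lemma fn_z2red f x : fn f m (z2red m x) = z2red m f.[x].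
Proof.
by apply/z2red_horner/z2red_eq; rewrite z2seq_natr z2red_val z2_mod.
Qed.

Lemma iter_fn_z2red f j x :
  iter j (fn f m) (z2red m x) = z2red m (poly_iter f j).[x].
Proof.
elim: j => [|j IH]; first by rewrite hornerX.
by rewrite iterS IH fn_z2red /= horner_comp.
Qed.

End Reduction.

Lemma z2_even_or_odd (y : Z2) : z2even y \/ exists e, y = 1 + 2 * e.
Proof.
have : (z2seq y 1 < 2)%N by rewrite -z2_mod ltn_mod.
case E: (z2seq y 1) => [|[|//]] _.
  by have [e ->] := z2_exp2_dvd E; left; exists e; rewrite expr1.
right; have : z2red 1 y = z2red 1 1 by apply/z2red_eq => //; rewrite E.
by case/z2red_eqP => // e ->; exists e; rewrite expr1.
Qed.

Lemma zres_z2red n x : (0 < n)%N -> zres n (z2red n.+1 x) = z2red n x.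
Proof.
move=> n_gt0; apply: val_inj.
change (nat_of_ord (z2red n.+1 x) %% (Zp_trunc (2 ^ n)).+2 = nat_of_ord (z2red n x))%N.
by rewrite !z2red_val // Zp_trunc_exp2 // z2seq_modn.
Qed.

Lemma z2red_add_exp2_neq n x : z2red n.+1 (x + 2 ^+ n) <> z2red n.+1 x.
Proof.
case/z2red_eqP=> // b /addrI /(congr1 (z2red n.+1)).
rewrite z2redM // z2red_exp2 // mul0r => /(congr1 (@nat_of_ord _)).
rewrite z2red_val // -natrX z2seq_natr modn_small ?ltn_exp2l // => /eqP.
by rewrite expn_eq0.
Qed.

Lemma is_lift_size f n s s1 s2 :
  is_lift f n s s1 -> is_lift f n s s2 -> size s1 = size s2.
Proof.
move=> [/and3P[_ uniq_s1 _] mem_s1] [/and3P[_ uniq_s2 _] mem_s2].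
by apply/perm_size/uniq_perm => // y; rewrite mem_s1 mem_s2.
Qed.

Lemma fcycle_fn_return f m s x : (0 < m)%N -> fcycle (fn f m) s ->
  z2red m x \in s -> exists t, (poly_iter f (size s)).[x] = x + 2 ^+ m * t.
Proof.
move=> m_gt0 cycle_s xs; apply/(z2red_eqP m_gt0).
by rewrite -iter_fn_z2red // iter_size_fcycle.
Qed.

Lemma deriv_poly_iter_odd f n k s x : (0 < n)%N -> fcycle (fn f n.+1) s ->
  z2red n.+1 x \in s -> z2red n.+1 (x + 2 ^+ n) \in s ->
  exists e, (poly_iter f k)^`().[x] = 1 + 2 * e.
Proof.
move=> n_gt0 cycle_s xs ys.
case: (z2_even_or_odd (poly_iter f k)^`().[x]) => // [[e even_deriv]].
have [c hc] := horner_add_exp2_even_deriv n_gt0 even_deriv.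
exfalso; apply: (@z2red_add_exp2_neq n x).
apply: (iter_fcycle_inj (k := k) cycle_s ys xs).
by rewrite !iter_fn_z2red // hc; apply/z2red_eqP => //; exists c.
Qed.

Lemma a_coef_double f n k x t e : (0 < n)%N ->
  (poly_iter f k).[x] = x + 2 ^+ n * t -> (poly_iter f k)^`().[x] = 1 + 2 * e ->
  exists c, a_coef f (k + k) x = 1 + 4 * c.
Proof.
case: n => // n _ gx odd_deriv.
rewrite a_coefD /a_coef gx exprS -mulrA.
have [c ->] := deriv_horner_add_double (poly_iter f k) x (2 ^+ n * t).
by rewrite odd_deriv; exists (e + e ^+ 2 + c * (1 + 2 * e)); ring.
Qed.

Theorem lemma3p8 (f : {poly Z2}) (n k : nat) (s : seq 'Z_(2 ^ n)) :
  (1 <= n)%N ->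
  is_cycle (fn f n) s -> size s = k ->
  grows f n s ->
  forall s' : seq 'Z_(2 ^ n.+1), is_lift f n s s' ->
  forall x : Z2, z2red n.+1 x \in s' ->
    strongly_grows_at f n.+1 (size s') x \/ strongly_splits_at f n.+1 (size s') x.
Proof.
move=> n_gt0 /and3P[_ _ cycle_s] _ [s'' [lift_s'' size_s'']] s' lift_s' x xs'.
have [/and3P[_ _ cycle_s'] mem_s'] := lift_s'.
have size_s' : size s' = (size s + size s)%N.
  by rewrite (is_lift_size lift_s' lift_s'') size_s'' mul2n addnn.
have xs : z2red n x \in s by rewrite -zres_z2red // -mem_s'.
have red_n : z2red n (x + 2 ^+ n) = z2red n x.
  by apply/z2red_eqP => //; exists 1; rewrite mulr1.
have ys' : z2red n.+1 (x + 2 ^+ n) \in s' by rewrite mem_s' zres_z2red // red_n.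
have [t gx] := fcycle_fn_return n_gt0 cycle_s xs.
have [e odd_deriv] := deriv_poly_iter_odd (size s) n_gt0 cycle_s' xs' ys'.
have a_1mod4 : exists c, a_coef f (size s') x = 1 + 4 * c.
  by rewrite size_s'; exact: a_coef_double n_gt0 gx odd_deriv.
have [b hb] := fcycle_fn_return (ltn0Sn n) cycle_s' xs'.
have b_def : (poly_iter f (size s')).[x] - x = 2 ^+ n.+1 * b by rewrite hb addrC addKr.
by case: (pselect (z2even b)); [right | left]; split=> //; exists b.
Qed.
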